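(* Let $\Pi$ be an ASP(LC) program, let $\sigma^p$ be the set of propositional atoms occurring in $\Pi$ and $\sigma^f$ the set of object constants occurring in $\Pi$ that do not belong to the background signature $\sigma^{bg}$ (the theory of integers or of reals), and identify $\Pi$ with the conjunction of the formulas $B\land N\land LC\rightarrow a$ over all its rules. (a) If $(X,T)$ is an LJN-answer set of $\Pi$, then for every interpretation $\langle I^f,X\rangle$ of $\sigma^p\cup\sigma^f$ such that $I^f\models_{bg}T\cup\overline{T}$, we have $\langle I^f,X\rangle\models_{bg}\mathrm{SM}[\Pi;\sigma^p]$. (b) For every interpretation $I=\langle I^f,X\rangle$ of $\sigma^p\cup\sigma^f$, if $\langle I^f,X\rangle\models_{bg}\mathrm{SM}[\Pi;\sigma^p]$, then the LJN-interpretation $(X,T)$ with $T=\{t\mid t\text{ is a theory atom of }\Pi\text{ and }I^f\models_{bg}t\}$ is an LJN-answer set of $\Pi$.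
   Context: Formulas are (possibly many-sorted) first-order formulas built from $\bot,\land,\lor,\rightarrow,\forall,\exists$; $\neg F$ abbreviates $F\rightarrow\bot$, $\top$ abbreviates $\neg\bot$. Stable model operator. For predicate symbols $u,c$ of the same arity, $u\le c$ denotes $\forall\mathbf{x}(u(\mathbf{x})\rightarrow c(\mathbf{x}))$; $u=c$ denotes $\forall\mathbf{x}(u(\mathbf{x})\leftrightarrow c(\mathbf{x}))$ if $u,c$ are predicate symbols and $\forall\mathbf{x}(u(\mathbf{x})=c(\mathbf{x}))$ if they are function symbols; for lists these are conjunctions of the componentwise expressions. Let $\mathbf{c}$ be a list of distinct predicate and function constants and $\widehat{\mathbf{c}}$ a list of distinct predicate and function variables corresponding to $\mathbf{c}$. Write $\mathbf{c}^{pred}$, $\widehat{\mathbf{c}}^{pred}$ for the sublists of predicate symbols. $\widehat{\mathbf{c}}<\mathbf{c}$ abbreviates $(\widehat{\mathbf{c}}^{pred}\le\mathbf{c}^{pred})\land\neg(\widehat{\mathbf{c}}=\mathbf{c})$. For a formula $F$, $F^*(\widehat{\mathbf{c}})$ is defined recursively: if $F$ is atomic (including $\bot$), $F^*=F'\land F$ where $F'$ is obtained from $F$ by replacing every intensional constant from $\mathbf{c}$ by the corresponding variable from $\widehat{\mathbf{c}}$; $(G\land H)^*=G^*\land H^*$; $(G\lor H)^*=G^*\lor H^*$; $(G\rightarrow H)^*=(G^*\rightarrow H^* )\land(G\rightarrow H)$; $(\forall xG)^*=\forall xG^*$; $(\exists xG)^*=\exists xG^*$. Then $\mathrm{SM}[F;\mathbf{c}]$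 is the second-order formula $F\land\neg\exists\widehat{\mathbf{c}}(\widehat{\mathbf{c}}<\mathbf{c}\land F^*(\widehat{\mathbf{c}}))$. Background theory. Let $\sigma^{bg}$ be the (many-sorted) signature of a background theory $bg$; an interpretation of $\sigma^{bg}$ satisfying $bg$ is a background interpretation. For a signature $\sigma$ disjoint from $\sigma^{bg}$, an interpretation $I$ of $\sigma$ satisfies a (possibly second-order) sentence $F$ w.r.t. $bg$, written $I\models_{bg}F$, if there is a background interpretation $J$ of $\sigma^{bg}$ with the same universe as $I$ such that $I\cup J\models F$. For a signature of object and propositional constants, an interpretation is identified with $\langle I^f,X\rangle$, where $I^f$ is its restriction to the object constants and $X$ the set of propositional constants it makes true. ASP(LC) programs. An ASP(LC) program is a set of rules $a\leftarrow B,N,LC$, where $a$ is a propositional atom or $\bot$, $B$ is a set of propositional atoms, $N$ is a set of negative literals $\mathit{not}\ c$ ($c$ a propositional atom), and $LC$ is a set of theory atoms, i.e. linear constraints $\sum_{i=1}^n c_i\times x_i\bowtie k$ with $\bowtie\in\{\le,\ge,=\}$, each $x_i$ an object constant of sort integers (resp. reals) and $c_i,k$ integers (resp. reals); theory atoms are sentences of $\sigma^f\cup\sigma^{bg}$. As a formula, commas are conjunctions and $\mathit{not}$ is $\neg$. An LJN-interpretation is a pair $(X,T)$ with $X\subseteq\sigma^p$ and $T$ a subset of the theory atoms occurring in $\Pi$ such that some interpretation $I$ of $\sigma^f$ satisfies $I\models_{bg}T\cup\overline{T}$, where $\overline{T}$ is the set of negations of the theory atoms occurring in $\Pi$ but not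 in $T$. $(X,T)$ satisfies an atom $b$ iff $b\in X$, a literal $\mathit{not}\ c$ iff $c\notin X$, a theory atom $t$ iff $t\in T$, and compound formulas as usual. The LJN-reduct $\Pi^{(X,T)}$ consists of the rules $a\leftarrow B$ for each rule $a\leftarrow B,N,LC$ of $\Pi$ such that $(X,T)$ satisfies $N\land LC$. $(X,T)$ is an LJN-answer set of $\Pi$ if $(X,T)$ satisfies $\Pi$ and $X$ is the smallest set of atoms satisfying $\Pi^{(X,T)}$. *)

From HB Require Import structures.
From mathcomp Require Import all_boot all_order all_algebra.
From mathcomp Require Import reals.
From Stdlib Require List.
Set Implicit Arguments. Unset Strict Implicit. Unset Printing Implicit Defensive.
Import Order.TTheory GRing.Theory Num.Theory.
Local Open Scope ring_scope.

(* Theory atoms: linear constraints  sum_i c_i * x_i  rel  k           *)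
(* over object constants x_i : V, coefficients/bound in D.             *)
Inductive rel_op := LeOp | GeOp | EqOp.

Record lin_constr (D : Type) (V : Type) := LinConstr {
  lc_terms : seq (D * V)%type;
  lc_rel   : rel_op;
  lc_bound : D
}.

(* I^f : V -> D is an interpretation of the object constants; the background
   interpretation (standard integers / reals) is fixed by the choice of D. *)
Definition lc_holds (D : numDomainType) (V : Type) (I : V -> D)
    (t : lin_constr D V) : Prop :=
  let s := \sum_(p <- lc_terms t) p.1 * I p.2 in
  match lc_rel t with
  | LeOp => s <= lc_bound t
  | GeOp => s >= lc_bound t
  | EqOp => s = lc_bound t
  end.

(* ASP(LC) rules  a <- B, N, LC   (head None stands for bottom)        *)
Record rule (D : Type) (A V : Type) := Rule {
  r_head : option A;
  r_pos  : seq A;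
  r_neg  : seq A;                (* N : the atoms c of "not c" *)
  r_lc   : seq (lin_constr D V)
}.

Definition program (D : Type) (A V : Type) := seq (rule D A V).

Definition occurs_p D A V (P : program D A V) (a : A) : Prop :=
  exists r, List.In r P /\
    (r_head r = Some a \/ List.In a (r_pos r) \/ List.In a (r_neg r)).

Definition occurs_t D A V (P : program D A V) (t : lin_constr D V) : Prop :=
  exists r, List.In r P /\ List.In t (r_lc r).

(* Formulas (ground: the only symbols are propositional atoms of A and *)
(* theory atoms, which are sentences of sigma^f u sigma^bg).           *)
Inductive formula (D : Type) (A V : Type) :=
| FBot
| FAtom of A
| FTh of lin_constr D V
| FAnd of formula D A V & formula D A V
| FOr  of formula D A V & formula D A V
| FImp of formula D A V & formula D A V.
Arguments FBot {D A V}.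
Arguments FAtom {D A V}.
Arguments FTh {D A V}.
Arguments FAnd {D A V}.
Arguments FOr {D A V}.
Arguments FImp {D A V}.

Definition FNeg D A V (F : formula D A V) := FImp F FBot.
Definition FTop D A V : formula D A V := FNeg FBot.

Fixpoint bigAnd D A V (l : seq (formula D A V)) : formula D A V :=
  match l with
  | [::] => FTop D A V
  | [:: F] => F
  | F :: l' => FAnd F (bigAnd l')
  end.

Definition rule_formula D A V (r : rule D A V) : formula D A V :=
  FImp (FAnd (bigAnd [seq FAtom a | a <- r_pos r])
             (FAnd (bigAnd [seq FNeg (FAtom c) | c <- r_neg r])
                   (bigAnd [seq FTh t | t <- r_lc r])))
       (match r_head r with Some a => FAtom a | None => FBot end).

Definition program_formula D A V (P : program D A V) : formula D A V :=
  bigAnd [seq rule_formula r | r <- P].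

Fixpoint fsat (D : numDomainType) A V (I : V -> D) (X : A -> Prop)
    (F : formula D A V) : Prop :=
  match F with
  | FBot => False
  | FAtom a => X a
  | FTh t => lc_holds I t
  | FAnd G H => fsat I X G /\ fsat I X H
  | FOr G H => fsat I X G \/ fsat I X H
  | FImp G H => fsat I X G -> fsat I X H
  end.

(* F^*(Y) evaluated at <I^f, X>, where the predicate (here: propositional)
   variables hat{sigma^p} are interpreted by Y.  Theory atoms contain no
   intensional constant, so F' = F for them. *)
Fixpoint fstar (D : numDomainType) A V (I : V -> D) (X Y : A -> Prop)
    (F : formula D A V) : Prop :=
  match F with
  | FBot => False /\ False
  | FAtom a => Y a /\ X a
  | FTh t => lc_holds I t /\ lc_holds I t
  | FAnd G H => fstar I X Y G /\ fstar I X Y H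
  | FOr G H => fstar I X Y G \/ fstar I X Y H
  | FImp G H => (fstar I X Y G -> fstar I X Y H) /\ (fsat I X G -> fsat I X H)
  end.

(* <I^f, X> |=_bg SM[F; c], with c the list of propositional constants
   satisfying the predicate C (here sigma^p). *)
Definition SM_sat (D : numDomainType) A V (C : A -> Prop) (F : formula D A V)
    (I : V -> D) (X : A -> Prop) : Prop :=
  fsat I X F /\
  ~ exists Y : A -> Prop,
      ((forall p, C p -> Y p -> X p) /\ ~ (forall p, C p -> (Y p <-> X p)))
      /\ fstar I X Y F.

Definition LJN_interp (D : numDomainType) A V (P : program D A V)
    (X : A -> Prop) (T : lin_constr D V -> Prop) : Prop :=
  (forall a, X a -> occurs_p P a) /\
  (forall t, T t -> occurs_t P t) /\
  exists I : V -> D,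
    (forall t, T t -> lc_holds I t) /\
    (forall t, occurs_t P t -> ~ T t -> ~ lc_holds I t).

Definition head_sat A (X : A -> Prop) (h : option A) : Prop :=
  match h with Some a => X a | None => False end.

Definition sat_N_LC D A V (X : A -> Prop) (T : lin_constr D V -> Prop)
    (r : rule D A V) : Prop :=
  (forall c, List.In c (r_neg r) -> ~ X c) /\ (forall t, List.In t (r_lc r) -> T t).

Definition LJN_sat D A V (P : program D A V)
    (X : A -> Prop) (T : lin_constr D V -> Prop) : Prop :=
  forall r, List.In r P ->
    (forall b, List.In b (r_pos r) -> X b) -> sat_N_LC X T r -> head_sat X (r_head r).

(* Z satisfies the LJN-reduct P^(X,T): rules  a <- B  for rules of P whose
   N /\ LC is satisfied by (X,T). *)
Definition sat_reduct D A V (P : program D A V)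
    (X : A -> Prop) (T : lin_constr D V -> Prop) (Z : A -> Prop) : Prop :=
  forall r, List.In r P -> sat_N_LC X T r ->
    (forall b, List.In b (r_pos r) -> Z b) -> head_sat Z (r_head r).

Definition LJN_answer_set (D : numDomainType) A V (P : program D A V)
    (X : A -> Prop) (T : lin_constr D V -> Prop) : Prop :=
  LJN_interp P X T /\
  LJN_sat P X T /\
  sat_reduct P X T X /\
  (forall Z : A -> Prop, (forall a, Z a -> occurs_p P a) ->
     sat_reduct P X T Z -> forall a, X a -> Z a).

From mathcomp Require Import all_boot all_order all_algebra.
From mathcomp Require Import reals.
From Stdlib Require List.
From Stdlib Require Import Classical.

(* Once the theory atoms of the program are evaluated the same way by [T] and
   by [If], the program formula holds at <If, X> exactly when (X, T) satisfies
   the program, and [F^*] with predicate variables [Y] holds exactly when the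
   set [Y ∩ X] is a model of the LJN-reduct.  The minimality condition of SM
   (no proper [Y ⊂ X] with [F^*]) then matches the minimality of [X] among the
   models of the reduct, since models of the reduct are closed under
   intersection. *)

Lemma bigAnd_mapP (D : numDomainType) A V (Q : formula D A V -> Prop)
    (Q_top : Q (FTop D A V)) (Q_and : forall F G, Q (FAnd F G) <-> Q F /\ Q G)
    (T : Type) (f : T -> formula D A V) (l : seq T) :
  Q (bigAnd (map f l)) <-> (forall x, List.In x l -> Q (f x)).
Proof.
elim: l => [|x l IH] /=; first by split => // _ y [].
case: l IH => [|y l] IH.
  by split => [Qx z [<- | []] // | H]; apply: H; left.
rewrite Q_and IH; split => [[Qx Ql] z [<- // | /Ql //] | H].
by split => [|z Hz]; apply: H; [left | right].
Qed.

Lemma head_sat_meet A (Z1 Z2 : A -> Prop) (h : option A) :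
  head_sat Z1 h -> head_sat Z2 h -> head_sat (fun a => Z1 a /\ Z2 a) h.
Proof. by case: h. Qed.

Section Semantics.
Variables (D : numDomainType) (A V : Type).
Implicit Types (P : program D A V) (r : rule D A V) (I : V -> D)
  (X Y Z : A -> Prop) (T : lin_constr D V -> Prop).

Lemma fsat_bigAnd_map I X U (f : U -> formula D A V) l :
  fsat I X (bigAnd (map f l)) <-> (forall x, List.In x l -> fsat I X (f x)).
Proof. by apply: bigAnd_mapP => //=; tauto. Qed.

Lemma fstar_bigAnd_map I X Y U (f : U -> formula D A V) l :
  fstar I X Y (bigAnd (map f l)) <-> (forall x, List.In x l -> fstar I X Y (f x)).
Proof. by apply: bigAnd_mapP => //=; tauto. Qed.

Lemma fsat_rule_formula I X r :
  fsat I X (rule_formula r) <->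
  ((forall b, List.In b (r_pos r) -> X b) ->
   (forall c, List.In c (r_neg r) -> ~ X c) ->
   (forall t, List.In t (r_lc r) -> lc_holds I t) -> head_sat X (r_head r)).
Proof.
rewrite /rule_formula /= !fsat_bigAnd_map.
have -> : fsat I X (match r_head r with Some a => FAtom a | None => FBot end)
    = head_sat X (r_head r) by case: (r_head r).
by split => [H ? ? ? | H [? [? ?]]]; apply: H.
Qed.

Lemma fstar_rule_formula I X Y r :
  fstar I X Y (rule_formula r) <->
  (((forall b, List.In b (r_pos r) -> Y b /\ X b) ->
    (forall c, List.In c (r_neg r) -> ~ X c) ->
    (forall t, List.In t (r_lc r) -> lc_holds I t) ->
    head_sat (fun a => Y a /\ X a) (r_head r)) /\
   fsat I X (rule_formula r)).
Proof.
rewrite /rule_formula /= !fstar_bigAnd_map /=.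
have -> : fstar I X Y (match r_head r with Some a => FAtom a | None => FBot end)
    <-> head_sat (fun a => Y a /\ X a) (r_head r) by case: (r_head r) => /=; tauto.
have neg_iff : (forall c, List.In c (r_neg r) -> (Y c /\ X c -> False /\ False) /\ ~ X c)
    <-> (forall c, List.In c (r_neg r) -> ~ X c).
  by split => H c Hc; [case: (H c Hc) | split => [[_ /(H c Hc)] |]; last exact: H].
have lc_iff : (forall t, List.In t (r_lc r) -> lc_holds I t /\ lc_holds I t)
    <-> (forall t, List.In t (r_lc r) -> lc_holds I t).
  by split => H t Ht; [case: (H t Ht) | split; exact: H].
rewrite neg_iff lc_iff.
split => -[H ?]; split => //.
- by move=> ? ? ?; apply: H.
- by move=> [? [? ?]]; apply: H.
Qed.

Lemma sat_reduct_meet P X T Z1 Z2 :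
  sat_reduct P X T Z1 -> sat_reduct P X T Z2 ->
  sat_reduct P X T (fun a => Z1 a /\ Z2 a).
Proof.
move=> red1 red2 r Hr HN pos; apply: head_sat_meet.
- by apply: red1 => // b /pos [].
- by apply: red2 => // b /pos [].
Qed.

Lemma LJN_sat_reduct P X T : LJN_sat P X T -> sat_reduct P X T X.
Proof. by move=> sat r Hr HN pos; exact: sat. Qed.

Definition theory_agree P T I :=
  forall t, occurs_t P t -> (T t <-> lc_holds I t).

Section Agreement.
Context {P : program D A V} {T : lin_constr D V -> Prop} {I : V -> D}.
Hypothesis agree : theory_agree P T I.

Lemma sat_N_LC_iff X r : List.In r P ->
  sat_N_LC X T r <->
  (forall c, List.In c (r_neg r) -> ~ X c) /\
  (forall t, List.In t (r_lc r) -> lc_holds I t).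
Proof.
move=> Hr; split => -[HN HL]; split => // t Ht.
all: by apply/agree; [exists r | exact: HL].
Qed.

Lemma fsat_program_iff X :
  fsat I X (program_formula P) <-> LJN_sat P X T.
Proof.
rewrite /program_formula fsat_bigAnd_map.
split => H r Hr; move: (H r Hr); rewrite fsat_rule_formula.
- by move=> Hrule pos /(sat_N_LC_iff X _ Hr) [? ?]; exact: Hrule.
- by move=> Hrule pos neg lc; apply: Hrule => //; apply/sat_N_LC_iff.
Qed.

Lemma fstar_program_iff X Y :
  fstar I X Y (program_formula P) <->
  sat_reduct P X T (fun a => Y a /\ X a) /\ fsat I X (program_formula P).
Proof.
rewrite /program_formula fstar_bigAnd_map fsat_bigAnd_map.
split => [H | [red sat] r Hr].
- split => r Hr; have /fstar_rule_formula [Hrule ?] := H r Hr => //.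
  by move=> /(sat_N_LC_iff X _ Hr) [? ?] pos; exact: Hrule.
- rewrite fstar_rule_formula; split; last exact: sat.
  by move=> pos neg lc; apply: red => //; apply/sat_N_LC_iff.
Qed.

Lemma SM_sat_iff_answer_set X :
  (forall a, X a -> occurs_p P a) -> (forall t, T t -> occurs_t P t) ->
  SM_sat (occurs_p P) (program_formula P) I X <-> LJN_answer_set P X T.
Proof.
move=> X_occ T_occ.
have interp : LJN_interp P X T.
  split=> //; split=> //; exists I; split.
  - by move=> t Tt; apply/agree; auto.
  - by move=> t occ nT /agree => /(_ occ).
rewrite /SM_sat /LJN_answer_set fsat_program_iff.
split => [[sat noY] | [_ [sat [_ minX]]]].
- do 3!split => //; first exact: LJN_sat_reduct.
  move=> Z _ redZ a Xa; apply: NNPP => nZa; apply: noY.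
  exists (fun p => Z p /\ X p); split.
  + by split => [p _ [] // | H]; apply: nZa; case: (H a (X_occ a Xa)) => _ /(_ Xa) [].
  + apply/fstar_program_iff; split; last exact/fsat_program_iff.
    apply: sat_reduct_meet; last exact: LJN_sat_reduct.
    by apply: sat_reduct_meet; last exact: LJN_sat_reduct.
- split => // -[Y [[Y_le Y_ne] /fstar_program_iff [redY _]]]; apply: Y_ne.
  have X_le := minX _ (fun a (Ha : Y a /\ X a) => X_occ a (proj2 Ha)) redY.
  by move=> p Cp; split => [/(Y_le p Cp) | /X_le []].
Qed.

End Agreement.

Lemma answer_set_SM P X T :
  LJN_answer_set P X T ->
  forall If : V -> D,
    (forall a, X a -> occurs_p P a) ->
    (forall t, T t -> lc_holds If t) ->
    (forall t, occurs_t P t -> ~ T t -> ~ lc_holds If t) ->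
    SM_sat (occurs_p P) (program_formula P) If X.
Proof.
move=> ans If X_occ T_holds nT_nholds.
have agree : theory_agree P T If.
  move=> t occ; split => [/T_holds // | Ht].
  by apply: NNPP => nT; exact: nT_nholds occ nT Ht.
have [_ [T_occ _]] := ans.1.
exact: (SM_sat_iff_answer_set agree _ X_occ T_occ).2 ans.
Qed.

Lemma SM_answer_set P (If : V -> D) X :
  (forall a, X a -> occurs_p P a) ->
  SM_sat (occurs_p P) (program_formula P) If X ->
  LJN_answer_set P X (fun t => occurs_t P t /\ lc_holds If t).
Proof.
move=> X_occ.
have agree : theory_agree P (fun t => occurs_t P t /\ lc_holds If t) If.
  by move=> t occ; split => [[] | ?].
have T_occ (t : lin_constr D V) : occurs_t P t /\ lc_holds If t -> occurs_t P t.
  by case.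
exact: (SM_sat_iff_answer_set agree _ X_occ T_occ).1.
Qed.

End Semantics.

Theorem theorem4 :
  (forall (A V : Type) (P : program int A V),
     (forall (X : A -> Prop) (T : lin_constr int V -> Prop),
        LJN_answer_set P X T ->
        forall If : V -> int,
          (forall a, X a -> occurs_p P a) ->
          (forall t, T t -> lc_holds If t) ->
          (forall t, occurs_t P t -> ~ T t -> ~ lc_holds If t) ->
          SM_sat (occurs_p P) (program_formula P) If X) /\
     (forall (If : V -> int) (X : A -> Prop),
        (forall a, X a -> occurs_p P a) ->
        SM_sat (occurs_p P) (program_formula P) If X ->
        LJN_answer_set P X (fun t => occurs_t P t /\ lc_holds If t))) /\
  (forall (R : realType) (A V : Type) (P : program R A V),
     (forall (X : A -> Prop) (T : lin_constr R V -> Prop),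
        LJN_answer_set P X T ->
        forall If : V -> R,
          (forall a, X a -> occurs_p P a) ->
          (forall t, T t -> lc_holds If t) ->
          (forall t, occurs_t P t -> ~ T t -> ~ lc_holds If t) ->
          SM_sat (occurs_p P) (program_formula P) If X) /\
     (forall (If : V -> R) (X : A -> Prop),
        (forall a, X a -> occurs_p P a) ->
        SM_sat (occurs_p P) (program_formula P) If X ->
        LJN_answer_set P X (fun t => occurs_t P t /\ lc_holds If t))).
Proof.
split => [A V P | R A V P]; split; [exact: answer_set_SM | exact: SM_answer_set
                                    | exact: answer_set_SM | exact: SM_answer_set].
Qed.
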